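(* For any metric space $(X,d)$, any $p\ge1$, and any $\mu\in\mathcal{P}_{p-1}(X)$, the set $M_p(\mu)\subseteq X$ is closed and bounded.
   Context: $\mathcal{P}_{p-1}(X)$ is the set of Borel probability measures $\mu$ on $(X,d)$ with $\int_X d^{p-1}(x,y)\,d\mu(y)<\infty$ for some (equivalently all) $x\in X$. For such $\mu$, $W_p(\mu,x,x'):=\int_X(d^p(x,y)-d^p(x',y))\,d\mu(y)$ and $M_p(\mu):=\{x\in X: W_p(\mu,x,x')\le0\text{ for all }x'\in X\}$. *)

From HB Require Import structures.
From mathcomp Require Import all_boot all_order all_algebra.
From mathcomp Require Import all_classical all_reals all_analysis.
Set Implicit Arguments. Unset Strict Implicit. Unset Printing Implicit Defensive.
Import Order.TTheory GRing.Theory Num.Theory.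
Local Open Scope classical_set_scope.
Local Open Scope ring_scope.

Definition is_metric (R : realType) (X : Type) (d : X -> X -> R) : Prop :=
  [/\ (forall x y, 0 <= d x y),
      (forall x y, d x y = 0 <-> x = y),
      (forall x y, d x y = d y x) &
      (forall x y z, d x z <= d x y + d y z)].

Definition d_ball (R : realType) (X : Type) (d : X -> X -> R) (x : X) (r : R)
  : set X := [set y | d x y < r].

Definition d_open (R : realType) (X : Type) (d : X -> X -> R) (U : set X) : Prop :=
  forall x, U x -> exists2 r : R, 0 < r & d_ball d x r `<=` U.

Definition d_closed (R : realType) (X : Type) (d : X -> X -> R) (A : set X) : Prop :=
  d_open d (~` A).

Definition d_bounded (R : realType) (X : Type) (d : X -> X -> R) (A : set X) : Prop :=
  exists r : R, forall x y, A x -> A y -> d x y <= r.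

Definition is_borel_of (R : realType) (dm : measure_display) (X : measurableType dm)
  (d : X -> X -> R) : Prop :=
  (measurable : set (set X)) = <<s [set U | d_open d U] >>.

Definition finite_moment (R : realType) (dm : measure_display) (X : measurableType dm)
  (d : X -> X -> R) (q : R) (mu : probability X R) : Prop :=
  exists x : X, (\int[mu]_y ((d x y) `^ q)%:E < +oo)%E.

Definition W_p (R : realType) (dm : measure_display) (X : measurableType dm)
  (d : X -> X -> R) (p : R) (mu : probability X R) (x x' : X) : \bar R :=
  (\int[mu]_y (((d x y) `^ p - (d x' y) `^ p)%:E))%E.

Definition M_p (R : realType) (dm : measure_display) (X : measurableType dm)
  (d : X -> X -> R) (p : R) (mu : probability X R) : set X :=
  [set x | forall x' : X, (W_p d p mu x x' <= 0)%E].

(* Write f_x(y) = d(x,y)^p.  The tangent inequality for t |-> t^p gives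
   f_x - f_z <= p d(x,z) d(x,.)^(p-1), and a finite (p-1)-moment at one point
   x1 gives one at every point, so every difference f_x - f_z is integrable
   and W_p(mu,x,z) is a real number satisfying W_p(x,x') = W_p(x,z) + W_p(z,x')
   and W_p(x,z) >= - p d(z,x) int d(z,.)^(p-1) dmu.  Hence W_p(mu,z,x') > 0
   persists on a ball around z, and the complement of M_p(mu) is open.
   For boundedness, dominated convergence gives a radius r whose tail
   int_{d(x1,.) >= r} (1 + p d(x1,.)^(p-1)) dmu is below 1/4.  If D = d(x1,x)
   is large, the integrand f_x - f_x1 is at least (D-r)^p - r^p >= D - r - r^p
   on the ball B(x1,r) and at least -p D d(x1,.)^(p-1) off it, which forces
   W_p(mu,x,x1) > 0, so x is not in M_p(mu). *)

From HB Require Import structures.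
From mathcomp Require Import all_boot all_order all_algebra.
From mathcomp Require Import all_classical all_reals all_analysis.
From mathcomp Require Import lra measurable_realfun.
Import Order.TTheory GRing.Theory Num.Theory.
Local Open Scope classical_set_scope.
Local Open Scope ring_scope.

Section powR_inequalities.
Context {R : realType}.
Implicit Types p q a b : R.

Lemma powR_MVT p {a b} : 0 < a -> a <= b ->
  exists2 c, a <= c <= b & b `^ p - a `^ p = p * c `^ (p - 1) * (b - a).
Proof.
move=> a0 ab.
have pos x : a <= x -> 0 < x by exact: lt_le_trans.
have hder x : x \in `]a, b[ -> is_derive x 1 (fun x => x `^ p) (p * x `^ (p - 1)).
  by rewrite in_itv /= => /andP[/ltW/pos x0 _]; exact: @is_derive1_powR R p x x0.
have [|c] := MVT_segment ab hder.
  apply: derivable_within_continuous => x; rewrite in_itv /= => /andP[/pos x0 _].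
  by have [] := @is_derive1_powR R p x x0.
by rewrite in_itv /=; exists c.
Qed.

Lemma powR_tangent {p a b} : 1 <= p -> 0 <= a -> 0 <= b ->
  a `^ p - b `^ p <= p * a `^ (p - 1) * (a - b).
Proof.
move=> p1 a0 b0; have p0 : 0 < p by exact: lt_le_trans p1.
have q0 : 0 <= p - 1 by rewrite subr_ge0.
have [->|an0] := eqVneq a 0.
  rewrite powR0 ?gt_eqF // sub0r add0r mulrN.
  have [->|pn1] := eqVneq p 1; first by rewrite subrr powRr0 mulr1 mul1r powRr1.
  by rewrite powR0 ?subr_eq0 // mulr0 mul0r oppr0 oppr_le0 powR_ge0.
have a_gt0 : 0 < a by rewrite lt0r an0.
have [->|bn0] := eqVneq b 0.
  rewrite powR0 ?gt_eqF // !subr0 -mulrA (mulrC (a `^ _)) mulr_powRB1 //.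
  by rewrite ler_peMl ?powR_ge0.
have b_gt0 : 0 < b by rewrite lt0r bn0.
have [ab|/ltW ba] := leP a b.
  have [c /andP[ac cb] E] := powR_MVT p a_gt0 ab.
  rewrite -opprB E -(opprB b) mulrN lerN2 ler_wpM2r ?subr_ge0 // ler_wpM2l ?(ltW p0) //.
  by rewrite ge0_ler_powR // nnegrE ltW // (lt_le_trans a_gt0).
have [c /andP[bc ca] ->] := powR_MVT p b_gt0 ba.
rewrite ler_wpM2r ?subr_ge0 // ler_wpM2l ?(ltW p0) //.
by rewrite ge0_ler_powR // nnegrE ltW // (lt_le_trans b_gt0).
Qed.

Lemma powRD_le {q a b} : 0 <= q -> 0 <= a -> 0 <= b ->
  (a + b) `^ q <= 2 `^ q * (a `^ q + b `^ q).
Proof.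
move=> q0 a0 b0; wlog ab : a b a0 b0 / a <= b.
  move=> H; case: (leP a b) => [|/ltW] ?; first exact: H.
  by rewrite addrC (addrC (a `^ q)); exact: H.
apply: (@le_trans _ _ ((2 * b) `^ q)).
  by rewrite ge0_ler_powR ?nnegrE ?mulr_ge0 ?addr_ge0 //; lra.
by rewrite powRM // ler_wpM2l ?powR_ge0 // lerDr powR_ge0.
Qed.

End powR_inequalities.

Section metric.
Context {R : realType} {X : Type} {d : X -> X -> R}.
Hypothesis hd : is_metric d.

Lemma dist_ge0 x y : 0 <= d x y. Proof. by case: hd. Qed.
Lemma dist_sym x y : d x y = d y x. Proof. by case: hd. Qed.
Lemma dist_triangle x y z : d x z <= d x y + d y z. Proof. by case: hd. Qed.

Lemma ler_dist_distB z y y' : `|d z y' - d z y| <= d y y'.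
Proof.
have := dist_triangle z y' y; have := dist_triangle z y y'.
rewrite (dist_sym y' y) ler_norml; lra.
Qed.

Lemma powR_distB_le {p} x z y : 1 <= p ->
  d x y `^ p - d z y `^ p <= p * d x z * d x y `^ (p - 1).
Proof.
move=> p1; apply: (le_trans (powR_tangent p1 (dist_ge0 x y) (dist_ge0 z y))).
rewrite mulrAC ler_wpM2r ?powR_ge0 // ler_wpM2l ?(le_trans _ p1) //.
have := dist_triangle x z y; lra.
Qed.

Lemma powR_dist_le q x z y : 0 <= q ->
  d z y `^ q <= 2 `^ q * (d z x `^ q + d x y `^ q).
Proof.
move=> q0; apply: le_trans (powRD_le q0 (dist_ge0 z x) (dist_ge0 x y)).
by rewrite ge0_ler_powR ?nnegrE ?addr_ge0 ?dist_ge0 ?dist_triangle.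
Qed.

End metric.

Section metric_measure.
Context {R : realType} {dm : measure_display} {X : measurableType dm}.
Context {d : X -> X -> R}.
Hypotheses (hd : is_metric d) (open_measurable : forall U, d_open d U -> measurable U).

Lemma measurable_dist z : measurable_fun setT (d z).
Proof.
apply: (measurability _ (RGenOpens.measurableE R)).
move=> _ [_ [a [b ->]] <-]; rewrite setTI; apply: open_measurable => y /=.
rewrite in_itv /= => /andP[ay yb].
exists (Num.min (d z y - a) (b - d z y)); first by rewrite lt_min !subr_gt0 ay yb.
move=> y'; rewrite /d_ball /= lt_min in_itv /= => /andP[h1 h2].
have := ler_dist_distB hd z y y'; rewrite ler_norml; lra.
Qed.

Lemma measurable_powR_dist q z : measurable_fun setT (fun y => d z y `^ q).
Proof. exact: measurableT_comp (measurable_powR q) (measurable_dist z). Qed.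

Variable mu : {finite_measure set X -> \bar R}.

Lemma integrable_powR_dist q x z : 0 <= q ->
  (\int[mu]_y (d x y `^ q)%:E < +oo)%E ->
  mu.-integrable setT (EFin \o (fun y => d z y `^ q)).
Proof.
move=> q0 moment_x.
have mpow w : measurable_fun setT (EFin \o (fun y => d w y `^ q)).
  exact/measurable_EFinP/measurable_powR_dist.
have ix : mu.-integrable setT (EFin \o (fun y => d x y `^ q)).
  apply/integrableP; split => //.
  rewrite (eq_integral (fun y => (d x y `^ q)%:E)) // => y _ /=.
  by rewrite ger0_norm // powR_ge0.
have hi : mu.-integrable setT (fun y => (2 `^ q)%:E *
    ((EFin \o cst (d z x `^ q)%R) \+ (EFin \o (fun y => d x y `^ q)%R)) y)%E.
  apply: (integrableZl measurableT); apply: (integrableD measurableT _ ix).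
  exact: finite_measure_integrable_cst.
apply: (le_integrable measurableT (mpow z) _ hi) => y _ /=.
rewrite lee_fin !ger0_norm ?mulr_ge0 ?addr_ge0 ?powR_ge0 //.
exact: powR_dist_le.
Qed.

End metric_measure.

Section Wasserstein.
Context {R : realType} {dm : measure_display} {X : measurableType dm}.
Context {d : X -> X -> R}.
Hypotheses (hd : is_metric d) (open_measurable : forall U, d_open d U -> measurable U).
Variables (p : R) (mu : probability X R) (x1 : X).
Hypotheses (p1 : 1 <= p) (moment_x1 : (\int[mu]_y (d x1 y `^ (p - 1))%:E < +oo)%E).

Let p_ge0 : 0 <= p. Proof. exact: le_trans p1. Qed.

Let integrable_moment z : mu.-integrable setT (EFin \o (fun y => d z y `^ (p - 1))).
Proof.
apply: (integrable_powR_dist hd open_measurable mu _ x1 z _ moment_x1).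
by rewrite subr_ge0.
Qed.

Lemma integrable_powR_distB x z :
  mu.-integrable setT (EFin \o (fun y => d x y `^ p - d z y `^ p)).
Proof.
have hi : mu.-integrable setT (fun y => (p * d x z)%:E *
    ((EFin \o (fun y => d x y `^ (p - 1))%R) \+
     (EFin \o (fun y => d z y `^ (p - 1))%R)) y)%E.
  apply: (integrableZl measurableT).
  exact: (integrableD measurableT (integrable_moment x) (integrable_moment z)).
apply: (le_integrable measurableT _ _ hi) => [|y _ /=].
  by apply/measurable_EFinP/measurable_funB; exact: measurable_powR_dist.
rewrite lee_fin [leRHS]ger0_norm ?mulr_ge0 ?addr_ge0 ?powR_ge0 ?dist_ge0 //.
have := powR_distB_le hd x z y p1; have := powR_distB_le hd z x y p1.
have := mulr_ge0 (mulr_ge0 p_ge0 (dist_ge0 hd x z)) (powR_ge0 (d x y) (p - 1)).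
have := mulr_ge0 (mulr_ge0 p_ge0 (dist_ge0 hd x z)) (powR_ge0 (d z y) (p - 1)).
rewrite (dist_sym hd z x) ler_norml mulrDr; lra.
Qed.

Definition W_pR x z := \int[mu]_y (d x y `^ p - d z y `^ p).

Lemma W_pE x z : W_p d p mu x z = (W_pR x z)%:E.
Proof.
rewrite /W_p /W_pR /Rintegral fineK //.
exact: integrable_fin_num (integrable_powR_distB x z).
Qed.

Lemma W_pR_split x z x' : W_pR x x' = W_pR x z + W_pR z x'.
Proof.
rewrite /W_pR -(RintegralD measurableT (integrable_powR_distB x z)
  (integrable_powR_distB z x')).
by apply: eq_Rintegral => y _; rewrite addrA subrK.
Qed.

Lemma W_pR_ge x z : - (p * d z x * \int[mu]_y d z y `^ (p - 1)) <= W_pR x z.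
Proof.
rewrite -mulNr -(RintegralZl _ measurableT (integrable_moment z)).
apply: (le_Rintegral measurableT _ (integrable_powR_distB x z)) => [|y _].
  exact: (integrableZl measurableT _ (integrable_moment z)).
by rewrite mulNr lerNl opprB; exact: powR_distB_le.
Qed.

Lemma d_closed_M_p : d_closed d (M_p d p mu).
Proof.
move=> z /= /existsNP[x' /negP]; rewrite W_pE lee_fin -ltNge => w_gt0.
set w := W_pR z x' in w_gt0.
set G := \int[mu]_y d z y `^ (p - 1).
have G0 : 0 <= G by apply: Rintegral_ge0 => y _; exact: powR_ge0.
have pG1 : 0 < p * G + 1 by rewrite ltr_wpDl ?mulr_ge0.
exists (w / (p * G + 1)); first exact: divr_gt0.
move=> x; rewrite /d_ball /= ltr_pdivlMr // => zx /(_ x').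
rewrite W_pE lee_fin (W_pR_split x z x') -/w; apply/negP; rewrite -ltNge.
have := W_pR_ge x z; have := dist_ge0 hd z x; rewrite -/G; nra.
Qed.

Definition tail_weight r y :=
  (1 + p * d x1 y `^ (p - 1)) * \1_[set y | r <= d x1 y] y.

Let weight_ge0 y : 0 <= 1 + p * d x1 y `^ (p - 1).
Proof. by rewrite addr_ge0 ?mulr_ge0 ?powR_ge0. Qed.

Lemma tail_weight_ge0 r y : 0 <= tail_weight r y.
Proof. by rewrite mulr_ge0 ?indicE. Qed.

Lemma tail_weight_le r y : tail_weight r y <= 1 + p * d x1 y `^ (p - 1).
Proof. by rewrite /tail_weight indicE; case: (_ \in _); rewrite ?mulr1 ?mulr0. Qed.

Lemma measurable_tail_weight r : measurable_fun setT (tail_weight r).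
Proof.
have mdist := measurable_dist hd open_measurable x1.
apply: measurable_funM; last apply: measurable_indic.
  apply: measurable_funD => //; apply: measurable_funM => //.
  exact: measurable_powR_dist.
have := mdist measurableT _ (measurable_itv `[r, +oo[).
by rewrite setTI; congr measurable; apply/seteqP; split => y /=; rewrite in_itv /= andbT.
Qed.

Let integrable_weight :
  mu.-integrable setT (EFin \o (fun y => 1 + p * d x1 y `^ (p - 1))).
Proof.
have := integrableD measurableT (finite_measure_integrable_cst mu 1 measurableT)
  (integrableZl measurableT p (integrable_moment x1)).
by congr (mu.-integrable _ _); apply/funext.
Qed.

Lemma integrable_tail_weight r : mu.-integrable setT (EFin \o tail_weight r).
Proof.
apply: (le_integrable measurableT _ _ integrable_weight) => [|y _ /=].
  exact/measurable_EFinP/measurable_tail_weight.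
by rewrite lee_fin !ger0_norm ?tail_weight_ge0 ?tail_weight_le.
Qed.

Lemma tail_weight_small : exists2 r, 0 <= r & \int[mu]_y tail_weight r y < 4^-1.
Proof.
have tail0 : {ae mu, forall y, setT y ->
    (fun n => (tail_weight n%:R y)%:E) @ \oo --> 0%E}.
  apply: aeW => y _; apply: cvg_near_cst; near=> n.
  rewrite /tail_weight indicE memNset ?mulr0 //=; apply/negP; rewrite -ltNge.
  by near: n; exact: nbhs_infty_gtr.
have dom : {ae mu, forall y n, setT y ->
    (`|(tail_weight n%:R y)%:E| <= (1 + p * d x1 y `^ (p - 1))%:E)%E}.
  by apply: aeW => y n _ /=; rewrite lee_fin !ger0_norm ?tail_weight_ge0 ?tail_weight_le.
have [_ _] := dominated_convergence measurableT
  (fun n => (measurable_EFinP _ _).2 (measurable_tail_weight n%:R))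
  (measurable_cst _) tail0 integrable_weight dom.
rewrite integral0 => /fine_cvg/cvgr_lt/(_ 4^-1)/(_ _)/filter_ex[|n hn].
  by rewrite invr_gt0.
by exists n%:R.
Unshelve. all: end_near.
Qed.

Lemma powR_distB_ge_tail r L x y : 0 <= r -> 2 * r <= d x1 x ->
  0 <= L <= (d x1 x - r) `^ p - r `^ p ->
  L - (L + d x1 x) * tail_weight r y <= d x y `^ p - d x1 y `^ p.
Proof.
move=> r0 rD /andP[L0 hL]; have D0 := dist_ge0 hd x1 x.
have g0 := mulr_ge0 p_ge0 (powR_ge0 (d x1 y) (p - 1)).
rewrite /tail_weight indicE; case: (boolP (_ \in _)) => [/set_mem /= ry|ry].
  have := powR_distB_le hd x1 x y p1; have := mulr_ge0 L0 g0; have := mulr_ge0 D0 g0.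
  rewrite mulr1n mulr1; lra.
have {}ry : d x1 y < r by rewrite ltNge; apply: contra ry => ?; exact/mem_set.
have := dist_triangle hd x1 y x; rewrite (dist_sym hd y x) => tri.
have dxy := dist_ge0 hd x y; have dx1y := dist_ge0 hd x1 y.
have : (d x1 x - r) `^ p <= d x y `^ p.
  by apply: ge0_ler_powR; rewrite ?nnegrE //; lra.
have : d x1 y `^ p <= r `^ p by apply: ge0_ler_powR; rewrite ?nnegrE //; lra.
rewrite mulr0n mulr0; lra.
Qed.

Lemma W_pR_gt0_far : exists c, forall x, c < d x1 x -> 0 < W_pR x x1.
Proof.
have [r r0 small] := tail_weight_small; have rp0 := powR_ge0 r p.
exists (3 * (r + r `^ p) + 1) => x far.
have rD : 2 * r <= d x1 x by lra.
have [L hL LD] : exists2 L,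
    0 <= L <= (d x1 x - r) `^ p - r `^ p & d x1 x - r - r `^ p <= L.
  by exists (d x1 x - r - r `^ p); rewrite // lerD2r le1r_powR ?andbT //; lra.
have integrable_lb :
    mu.-integrable setT (EFin \o (fun y => L - (L + d x1 x) * tail_weight r y)).
  have := integrableB measurableT (finite_measure_integrable_cst mu L measurableT)
    (integrableZl measurableT (L + d x1 x) (integrable_tail_weight r)).
  by congr (mu.-integrable _ _); apply/funext.
have := le_Rintegral measurableT integrable_lb (integrable_powR_distB x x1)
  (fun y _ => powR_distB_ge_tail r L x y r0 rD hL).
have mu_setT : fine (mu [set: X]) = 1 by rewrite probability_setT.
rewrite (RintegralB measurableT (finite_measure_integrable_cst mu L measurableT))
  ?(RintegralZl _ measurableT (integrable_tail_weight r)) ?Rintegral_cst //; last first.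
  exact: (integrableZl measurableT _ (integrable_tail_weight r)).
rewrite mu_setT mulr1 -/(W_pR x x1).
have K0 : 0 <= \int[mu]_y tail_weight r y.
  by apply: Rintegral_ge0 => y _; exact: tail_weight_ge0.
have LD0 : 0 <= L + d x1 x by lra.
have := ler_wpM2l LD0 (ltW small); lra.
Qed.

Lemma d_bounded_M_p : d_bounded d (M_p d p mu).
Proof.
have [c far] := W_pR_gt0_far.
have M_p_le x : M_p d p mu x -> d x1 x <= c.
  move=> Mx; rewrite leNgt; apply/negP => /far.
  by have := Mx x1; rewrite W_pE lee_fin leNgt => /negP.
exists (c + c) => x y /M_p_le hx /M_p_le hy.
by rewrite (le_trans (dist_triangle hd x x1 y)) // (dist_sym hd x x1) lerD.
Qed.

End Wasserstein.

Theorem corollary3p7 (R : realType) (dm : measure_display) (X : measurableType dm)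
  (d : X -> X -> R) (p : R) (mu : probability X R) :
  is_metric d -> is_borel_of d -> 1 <= p -> finite_moment d (p - 1) mu ->
  d_closed d (M_p d p mu) /\ d_bounded d (M_p d p mu).
Proof.
move=> hd borel p1 [x1 moment_x1].
have open_measurable U : d_open d U -> measurable U.
  by move=> oU; rewrite borel; exact: sub_sigma_algebra.
split; first exact: (d_closed_M_p hd open_measurable _ _ _ p1 moment_x1).
exact: (d_bounded_M_p hd open_measurable _ _ _ p1 moment_x1).
Qed.
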